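(* If $X$ and $Y$ are homotopy equivalent spaces, then the subspaces $\mathbf{w}(X)$ and $\mathbf{w}(Y)$ are homotopy equivalent, and the subspaces $\mathbf{aw}(X)$ and $\mathbf{aw}(Y)$ are homotopy equivalent.
   Context: A loop is trivial if path-homotopic to a constant loop. A sequence of loops $\alpha_n$ based at $x$ is a null-sequence if every neighborhood of $x$ contains $\alpha_n([0,1])$ for all but finitely many $n$. $\mathbf{aw}(X)=\{x\in X\mid \text{there is a null-sequence of non-trivial loops based at }x\}$ (with subspace topology). $\mathbf{w}(X)$ is the subspace of points $x$ at which $X$ is not semilocally simply connected, i.e. every neighborhood of $x$ contains a loop based at $x$ that is non-trivial in $X$. *)

From Stdlib Require Import Reals.
Open Scope R_scope.

Record Top := {
  pt :> Type;
  is_open : (pt -> Prop) -> Prop;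
  open_full : is_open (fun _ => True);
  open_inter : forall U V, is_open U -> is_open V -> is_open (fun x => U x /\ V x);
  open_union : forall F : (pt -> Prop) -> Prop,
      (forall U, F U -> is_open U) -> is_open (fun x => exists U, F U /\ U x)
}.

Definition continuous {A B : Type} (oA : (A -> Prop) -> Prop) (oB : (B -> Prop) -> Prop)
  (f : A -> B) : Prop :=
  forall V, oB V -> oA (fun a => V (f a)).

Definition prod_open {A B : Type} (oA : (A -> Prop) -> Prop) (oB : (B -> Prop) -> Prop)
  (W : A * B -> Prop) : Prop :=
  forall p, W p -> exists U V, oA U /\ oB V /\ U (fst p) /\ V (snd p) /\
    forall q, U (fst q) -> V (snd q) -> W q.

Definition R_open (U : R -> Prop) : Prop :=
  forall x, U x -> exists eps, 0 < eps /\ forall y, Rabs (y - x) < eps -> U y.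

Definition I := { t : R | 0 <= t <= 1 }.
Definition I_open (V : I -> Prop) : Prop :=
  exists U, R_open U /\ forall t : I, V t <-> U (proj1_sig t).
Definition I0 : I := exist _ 0 (conj (Rle_refl 0) Rle_0_1).
Definition I1 : I := exist _ 1 (conj Rle_0_1 (Rle_refl 1)).

Definition sub_open (X : Top) (P : X -> Prop) (V : {x : X | P x} -> Prop) : Prop :=
  exists U, is_open X U /\ forall y : {x : X | P x}, V y <-> U (proj1_sig y).

Lemma sub_open_full (X : Top) (P : X -> Prop) : sub_open X P (fun _ => True).
Proof. exists (fun _ => True); split; [apply open_full | tauto]. Qed.

Lemma sub_open_inter (X : Top) (P : X -> Prop) U V :
  sub_open X P U -> sub_open X P V -> sub_open X P (fun x => U x /\ V x).
Proof.
  intros [U' [HU HU']] [V' [HV HV']].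
  exists (fun x => U' x /\ V' x); split; [now apply open_inter|].
  intro y; rewrite HU', HV'; tauto.
Qed.

Lemma sub_open_union (X : Top) (P : X -> Prop) (F : ({x : X | P x} -> Prop) -> Prop) :
  (forall U, F U -> sub_open X P U) ->
  sub_open X P (fun x => exists U, F U /\ U x).
Proof.
  intros HF.
  exists (fun x => exists U, (is_open X U /\
            forall y : {x : X | P x}, U (proj1_sig y) -> exists V, F V /\ V y) /\ U x).
  split.
  - apply open_union. intros U [HU _]; exact HU.
  - intro y; split.
    + intros [V [HV Vy]]. destruct (HF V HV) as [U [HU HU']].
      exists U; split; [split; [exact HU|]|].
      * intros z Uz; exists V; split; [exact HV| now apply HU'].
      * now apply HU'.
    + intros [U [[_ HU] Uy]]. now apply HU.
Qed.

Definition subspace (X : Top) (P : X -> Prop) : Top := {|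
  pt := {x : X | P x};
  is_open := sub_open X P;
  open_full := sub_open_full X P;
  open_inter := sub_open_inter X P;
  open_union := sub_open_union X P
|}.

Definition homotopic (X Y : Top) (f g : X -> Y) : Prop :=
  exists H : X * I -> Y,
    continuous (prod_open (is_open X) I_open) (is_open Y) H /\
    (forall x, H (x, I0) = f x) /\ (forall x, H (x, I1) = g x).

Definition homotopy_equivalent (X Y : Top) : Prop :=
  exists (f : X -> Y) (g : Y -> X),
    continuous (is_open X) (is_open Y) f /\
    continuous (is_open Y) (is_open X) g /\
    homotopic X X (fun x => g (f x)) (fun x => x) /\
    homotopic Y Y (fun y => f (g y)) (fun y => y).

Definition loop (X : Top) (x : X) (a : I -> X) : Prop :=
  continuous I_open (is_open X) a /\ a I0 = x /\ a I1 = x.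

Definition trivial_loop (X : Top) (x : X) (a : I -> X) : Prop :=
  exists H : I * I -> X,
    continuous (prod_open I_open I_open) (is_open X) H /\
    (forall s, H (s, I0) = a s) /\ (forall s, H (s, I1) = x) /\
    (forall t, H (I0, t) = x /\ H (I1, t) = x).

(** w(X): points at which X is not semilocally simply connected. *)
Definition w_set (X : Top) (x : X) : Prop :=
  forall U, is_open X U -> U x ->
    exists a, loop X x a /\ ~ trivial_loop X x a /\ forall s, U (a s).

Definition aw_set (X : Top) (x : X) : Prop :=
  exists a : nat -> I -> X,
    (forall n, loop X x (a n) /\ ~ trivial_loop X x (a n)) /\
    (forall U, is_open X U -> U x ->
       exists N, forall n, (N <= n)%nat -> forall s, U (a n s)).

Definition w (X : Top) : Top := subspace X (w_set X).
Definition aw (X : Top) : Top := subspace X (aw_set X).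

(* If g o f is joined to the identity of X by a homotopy H, then for a loop a at x the
   map (s, t) |-> H (a s, t) is a free homotopy from the loop g o f o a to a, whose base
   point runs along t |-> H (x, t).  Stacking a nullhomotopy of g o f o a on top of it
   gives a square with bottom a, constant top and equal sides, and such a square
   contracts a.  Hence f sends non-trivial loops at x to non-trivial loops at f x; as it
   also preserves small and null sequences of loops, f maps w(X) into w(Y) and aw(X)
   into aw(Y).  Applied to the stages H (., t) themselves, the same fact shows that the
   homotopies of a homotopy equivalence restrict to w and aw. *)

From Stdlib Require Import Reals Lra Psatz.
From Stdlib Require Import ProofIrrelevance FunctionalExtensionality PropExtensionality.
Open Scope R_scope.

Definition ival (t : I) : R := proj1_sig t.

Lemma ival_bound (t : I) : 0 <= ival t <= 1.
Proof. exact (proj2_sig t). Qed.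

Lemma sig_eq {A : Type} (P : A -> Prop) (u v : {x | P x}) :
  proj1_sig u = proj1_sig v -> u = v.
Proof. apply eq_sig_hprop; intros; apply proof_irrelevance. Qed.

Lemma ival_inj (t1 t2 : I) : ival t1 = ival t2 -> t1 = t2.
Proof. apply sig_eq. Qed.

Definition clamp01 (x : R) : R := Rmax 0 (Rmin 1 x).

Lemma clamp01_bound (x : R) : 0 <= clamp01 x <= 1.
Proof.
  split; [apply Rmax_l|].
  apply Rmax_lub; [lra | apply Rmin_l].
Qed.

Definition Iclamp (x : R) : I := exist _ (clamp01 x) (clamp01_bound x).

Lemma Iclamp_le0 (x : R) : x <= 0 -> Iclamp x = I0.
Proof.
  intro hx; apply ival_inj; unfold ival, Iclamp, clamp01; simpl.
  unfold Rmax, Rmin; repeat destruct Rle_dec; lra.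
Qed.

Lemma Iclamp_ge1 (x : R) : 1 <= x -> Iclamp x = I1.
Proof.
  intro hx; apply ival_inj; unfold ival, Iclamp, clamp01; simpl.
  unfold Rmax, Rmin; repeat destruct Rle_dec; lra.
Qed.

Lemma Iclamp_ival (t : I) : Iclamp (ival t) = t.
Proof.
  apply ival_inj; pose proof (ival_bound t).
  unfold ival at 1, Iclamp, clamp01; simpl.
  unfold Rmax, Rmin; repeat destruct Rle_dec; lra.
Qed.

Lemma I_open_ball (c d : R) : I_open (fun t => Rabs (ival t - c) < d).
Proof.
  exists (fun y => Rabs (y - c) < d); split; [|tauto].
  intros x hx; exists (d - Rabs (x - c)); split; [lra|]; intros y hy.
  pose proof (Rabs_triang (y - x) (x - c)).
  replace (y - x + (x - c)) with (y - c) in * by ring; lra.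
Qed.

Lemma I_open_full : I_open (fun _ => True).
Proof.
  exists (fun _ => True); split; [|tauto].
  intros x _; exists 1; split; [lra | auto].
Qed.

Lemma I_open_inter (A B : I -> Prop) : I_open A -> I_open B -> I_open (fun t => A t /\ B t).
Proof.
  intros [A' [hA eA]] [B' [hB eB]]; exists (fun y => A' y /\ B' y); split.
  - intros x [ha hb].
    destruct (hA x ha) as [e1 [he1 h1]], (hB x hb) as [e2 [he2 h2]].
    exists (Rmin e1 e2); split; [now apply Rmin_glb_lt|].
    intros y hy; pose proof (Rmin_l e1 e2); pose proof (Rmin_r e1 e2).
    split; [apply h1 | apply h2]; lra.
  - intro t; rewrite eA, eB; tauto.
Qed.

(** * Continuous maps on the square *)

Notation square_open := (prod_open I_open I_open).

Definition coord1 (p : I * I) : R := ival (fst p).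
Definition coord2 (p : I * I) : R := ival (snd p).

Lemma square_box (W : I * I -> Prop) (p : I * I) (U1 V1 : I -> Prop) (d : R) :
  I_open U1 -> I_open V1 -> U1 (fst p) -> V1 (snd p) -> 0 < d ->
  (forall q, U1 (fst q) -> V1 (snd q) ->
     Rabs (coord1 q - coord1 p) < d -> Rabs (coord2 q - coord2 p) < d -> W q) ->
  exists U V, I_open U /\ I_open V /\ U (fst p) /\ V (snd p) /\
    forall q, U (fst q) -> V (snd q) -> W q.
Proof.
  intros hU hV hu hv hd hW.
  exists (fun t => U1 t /\ Rabs (ival t - coord1 p) < d),
         (fun t => V1 t /\ Rabs (ival t - coord2 p) < d).
  do 2 (split; [apply I_open_inter; auto; apply I_open_ball|]).
  unfold coord1, coord2; rewrite !Rminus_diag, !Rabs_R0.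
  repeat split; auto.
  intros q [] []; now apply hW.
Qed.

Lemma continuous_comp {A B C : Type} oA oB oC (f : A -> B) (g : B -> C) :
  continuous oA oB f -> continuous oB oC g -> continuous oA oC (fun x => g (f x)).
Proof. intros hf hg V hV; exact (hf _ (hg V hV)). Qed.

Lemma continuous_pair {A B : Type} oA oB (f : I * I -> A) (g : I * I -> B) :
  continuous square_open oA f -> continuous square_open oB g ->
  continuous square_open (prod_open oA oB) (fun p => (f p, g p)).
Proof.
  intros hf hg W hW p hp.
  destruct (hW _ hp) as [U [V [hU [hV [hUf [hVg hUV]]]]]].
  destruct (hf U hU p hUf) as [U1 [V1 [? [? [? [? h1]]]]]].
  destruct (hg V hV p hVg) as [U2 [V2 [? [? [? [? h2]]]]]].
  exists (fun t => U1 t /\ U2 t), (fun t => V1 t /\ V2 t).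
  repeat split; try apply I_open_inter; auto.
  intros q [] []; apply (hUV (f q, g q)); [apply h1 | apply h2]; auto.
Qed.

Lemma continuous_fst : continuous square_open I_open (@fst I I).
Proof.
  intros V hV p hp; exists V, (fun _ => True).
  repeat split; auto; apply I_open_full.
Qed.

Definition Rcont2 (f : I * I -> R) : Prop :=
  forall p e, 0 < e -> exists d, 0 < d /\ forall q,
    Rabs (coord1 q - coord1 p) < d -> Rabs (coord2 q - coord2 p) < d ->
    Rabs (f q - f p) < e.

Lemma continuous_of_Rcont2 (phi : I * I -> I) :
  Rcont2 (fun p => ival (phi p)) -> continuous square_open I_open phi.
Proof.
  intros hc V [U' [hU' eV]] p hp; apply eV in hp.
  destruct (hU' _ hp) as [e [he hball]], (hc p e he) as [d [hd hq]].
  apply (square_box _ p (fun _ => True) (fun _ => True) d); auto using I_open_full.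
  intros q _ _ h1 h2; apply eV, hball, hq; auto.
Qed.

Lemma Rcont2_coord1 : Rcont2 coord1.
Proof. intros p e he; exists e; auto. Qed.

Lemma Rcont2_coord2 : Rcont2 coord2.
Proof. intros p e he; exists e; auto. Qed.

Lemma Rcont2_const (c : R) : Rcont2 (fun _ => c).
Proof.
  intros p e he; exists 1; split; [lra|]; intros.
  rewrite Rminus_diag, Rabs_R0; auto.
Qed.

Ltac unabs :=
  repeat match goal with H : Rabs _ < _ |- _ => apply Rabs_def2 in H; destruct H end;
  apply Rabs_def1.

Lemma Rcont2_op2 (op : R -> R -> R) (f g : I * I -> R) :
  (forall a b a' b' e, Rabs (a' - a) < e -> Rabs (b' - b) < e ->
     Rabs (op a' b' - op a b) < e + e) ->
  Rcont2 f -> Rcont2 g -> Rcont2 (fun p => op (f p) (g p)).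
Proof.
  intros hop hf hg p e he.
  destruct (hf p (e / 2)) as [d1 [hd1 h1]]; [lra|].
  destruct (hg p (e / 2)) as [d2 [hd2 h2]]; [lra|].
  exists (Rmin d1 d2); split; [now apply Rmin_glb_lt|]; intros q hs hu.
  pose proof (Rmin_l d1 d2); pose proof (Rmin_r d1 d2).
  replace e with (e / 2 + e / 2) by field.
  apply hop; [apply h1 | apply h2]; lra.
Qed.

Lemma Rcont2_plus f g : Rcont2 f -> Rcont2 g -> Rcont2 (fun p => f p + g p).
Proof. apply Rcont2_op2; intros; unabs; lra. Qed.

Lemma Rcont2_minus f g : Rcont2 f -> Rcont2 g -> Rcont2 (fun p => f p - g p).
Proof. apply Rcont2_op2; intros; unabs; lra. Qed.

Lemma Rcont2_min f g : Rcont2 f -> Rcont2 g -> Rcont2 (fun p => Rmin (f p) (g p)).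
Proof. apply Rcont2_op2; intros; unabs; unfold Rmin; repeat destruct Rle_dec; lra. Qed.

Lemma Rcont2_max f g : Rcont2 f -> Rcont2 g -> Rcont2 (fun p => Rmax (f p) (g p)).
Proof. apply Rcont2_op2; intros; unabs; unfold Rmax; repeat destruct Rle_dec; lra. Qed.

Lemma Rcont2_clamp01 f : Rcont2 f -> Rcont2 (fun p => clamp01 (f p)).
Proof.
  intro hf; apply (Rcont2_max (fun _ => 0)); [apply Rcont2_const|].
  apply (Rcont2_min (fun _ => 1)); [apply Rcont2_const | exact hf].
Qed.

Lemma Rcont2_scal (c : R) f : Rcont2 f -> Rcont2 (fun p => c * f p).
Proof.
  intros hf p e he; pose proof (Rabs_pos c).
  destruct (hf p (e / (Rabs c + 1))) as [d [hd h]]; [apply Rdiv_lt_0_compat; lra|].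
  exists d; split; auto; intros q h1 h2; specialize (h q h1 h2).
  rewrite <- Rmult_minus_distr_l, Rabs_mult.
  assert (e / (Rabs c + 1) * (Rabs c + 1) = e) by (field; lra).
  pose proof (Rabs_pos (f q - f p)); nra.
Qed.

Lemma Rcont2_mult f g : (forall p, Rabs (f p) <= 1) -> (forall p, Rabs (g p) <= 1) ->
  Rcont2 f -> Rcont2 g -> Rcont2 (fun p => f p * g p).
Proof.
  intros bf bg hf hg p e he.
  destruct (hf p (e / 2)) as [d1 [hd1 h1]]; [lra|].
  destruct (hg p (e / 2)) as [d2 [hd2 h2]]; [lra|].
  exists (Rmin d1 d2); split; [now apply Rmin_glb_lt|]; intros q hs hu.
  pose proof (Rmin_l d1 d2); pose proof (Rmin_r d1 d2).
  specialize (h1 q ltac:(lra) ltac:(lra)); specialize (h2 q ltac:(lra) ltac:(lra)).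
  replace (f q * g q - f p * g p) with (f q * (g q - g p) + g p * (f q - f p)) by ring.
  eapply Rle_lt_trans; [apply Rabs_triang|]; rewrite !Rabs_mult.
  pose proof (bf q); pose proof (bg p); pose proof (Rabs_pos (f q)); pose proof (Rabs_pos (g p)).
  pose proof (Rabs_pos (g q - g p)); pose proof (Rabs_pos (f q - f p)); nra.
Qed.

Lemma Rcont2_coord_mult : Rcont2 (fun p => coord1 p * coord2 p).
Proof.
  apply Rcont2_mult; try (intro p; unfold coord1, coord2;
    rewrite Rabs_right; pose proof (ival_bound (fst p)); pose proof (ival_bound (snd p)); lra).
  - apply Rcont2_coord1.
  - apply Rcont2_coord2.
Qed.

Ltac Rcont2_auto := lazymatch goal with
  | |- Rcont2 (fun p => ival (Iclamp (@?f p))) => apply (Rcont2_clamp01 f); Rcont2_auto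
  | |- Rcont2 (fun p => coord1 p * coord2 p) => apply Rcont2_coord_mult
  | |- Rcont2 (fun p => coord1 p) => apply Rcont2_coord1
  | |- Rcont2 (fun p => coord2 p) => apply Rcont2_coord2
  | |- Rcont2 (fun p => @?f p - @?g p) => apply (Rcont2_minus f g); Rcont2_auto
  | |- Rcont2 (fun p => @?f p + @?g p) => apply (Rcont2_plus f g); Rcont2_auto
  | |- Rcont2 (fun p => Rmin (@?f p) (@?g p)) => apply (Rcont2_min f g); Rcont2_auto
  | |- Rcont2 (fun p => ?c * @?f p) => apply (Rcont2_scal c f); Rcont2_auto
  | |- Rcont2 (fun p => ?c) => apply Rcont2_const
  end.

Lemma continuous_paste (X : Top) (phi : I * I -> R) (F1 F2 : I * I -> X) :
  Rcont2 phi -> continuous square_open (is_open X) F1 -> continuous square_open (is_open X) F2 ->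
  (forall p, phi p = 0 -> F1 p = F2 p) ->
  continuous square_open (is_open X) (fun p => if Rle_dec (phi p) 0 then F1 p else F2 p).
Proof.
  intros hc h1 h2 heq V hV p.
  destruct (Rle_dec (phi p) 0) as [hle | hgt]; intro hp.
  - destruct (Rle_lt_or_eq_dec _ _ hle) as [hlt | he].
    + destruct (h1 V hV p hp) as [U1 [V1 [? [? [? [? hb]]]]]].
      destruct (hc p (- phi p)) as [d [hd hq]]; [lra|].
      apply (square_box _ p U1 V1 d); auto; intros q hu hv hs ht.
      specialize (hq q hs ht); apply Rabs_def2 in hq.
      destruct (Rle_dec (phi q) 0); [apply hb; auto | lra].
    + destruct (h1 V hV p hp) as [U1 [V1 [? [? [? [? hb1]]]]]].
      rewrite (heq p he) in hp.
      destruct (h2 V hV p hp) as [U2 [V2 [? [? [? [? hb2]]]]]].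
      apply (square_box _ p (fun t => U1 t /\ U2 t) (fun t => V1 t /\ V2 t) 1);
        try apply I_open_inter; auto; try lra.
      intros q [] [] _ _; destruct (Rle_dec (phi q) 0); [apply hb1 | apply hb2]; auto.
  - destruct (h2 V hV p hp) as [U1 [V1 [? [? [? [? hb]]]]]].
    destruct (hc p (phi p)) as [d [hd hq]]; [lra|].
    apply (square_box _ p U1 V1 d); auto; intros q hu hv hs ht.
    specialize (hq q hs ht); apply Rabs_def2 in hq.
    destruct (Rle_dec (phi q) 0); [lra | apply hb; auto].
Qed.

(** * Contracting squares *)

Definition tent (p : I * I) : R :=
  Rmin (Rmin (3 * coord1 p) (3 - 3 * coord1 p)) (Rmin (2 * coord2 p) (2 - 2 * coord2 p)).

Definition square_contraction {X : Type} (F : I * I -> X) (p : I * I) : X :=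
  if Rle_dec (coord2 p - 1 / 2) 0
  then F (Iclamp (coord1 p + 4 * (coord1 p * coord2 p) - 2 * coord2 p), Iclamp (tent p))
  else F (I0, Iclamp (tent p)).

Lemma Iclamp_tent_boundary (p : I * I) :
  coord1 p = 0 \/ coord1 p = 1 \/ coord2 p = 0 \/ coord2 p = 1 -> Iclamp (tent p) = I0.
Proof.
  intro h; apply Iclamp_le0; unfold tent, Rmin; repeat destruct Rle_dec; lra.
Qed.

(* A square whose top is constant and whose two sides are the same path contracts
   its bottom loop: the contraction first pulls the bottom up to the loop
   side . top . side^-1 (at height 1/2) and then retracts it along the side. *)
Lemma trivial_loop_of_square (X : Top) (F : I * I -> X) (a : I -> X) :
  continuous square_open (is_open X) F ->
  (forall s, F (s, I0) = a s) -> (forall s, F (s, I1) = F (I0, I1)) ->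
  (forall u, F (I0, u) = F (I1, u)) -> trivial_loop X (a I0) a.
Proof.
  intros cF bottom top sides.
  exists (square_contraction F); split; [|split; [|split]].
  - apply continuous_paste; [Rcont2_auto | | |].
    + apply (continuous_comp _ square_open _ _ F); [|exact cF].
      apply continuous_pair; apply continuous_of_Rcont2; unfold tent; Rcont2_auto.
    + apply (continuous_comp _ square_open _ _ F); [|exact cF].
      apply continuous_pair; apply continuous_of_Rcont2; unfold tent; Rcont2_auto.
    + intros p hp.
      assert (hu : coord2 p = 1 / 2) by lra.
      assert (hs : 0 <= coord1 p <= 1) by apply ival_bound.
      assert (htent : 1 / 3 <= coord1 p <= 2 / 3 -> 1 <= tent p).
      { intro; unfold tent; rewrite hu; repeat apply Rmin_glb; lra. }
      rewrite hu.
      destruct (Rle_dec (coord1 p) (1 / 3)); [|destruct (Rle_dec (coord1 p) (2 / 3))].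
      * rewrite Iclamp_le0 by lra; reflexivity.
      * rewrite (Iclamp_ge1 (tent p)), !top by lra; reflexivity.
      * rewrite Iclamp_ge1 by lra; symmetry; apply sides.
  - intro s; unfold square_contraction, coord2; simpl.
    destruct Rle_dec; [|lra].
    rewrite Iclamp_tent_boundary by (right; right; left; reflexivity).
    replace (coord1 (s, I0) + 4 * (coord1 (s, I0) * 0) - 2 * 0) with (ival s)
      by (unfold coord1; simpl; ring).
    rewrite Iclamp_ival; apply bottom.
  - intro s; unfold square_contraction, coord2; simpl.
    destruct Rle_dec; [lra|].
    rewrite Iclamp_tent_boundary by (right; right; right; reflexivity).
    apply bottom.
  - intro u; pose proof (ival_bound u).
    unfold square_contraction; rewrite !Iclamp_tent_boundary by (unfold coord1; simpl; tauto).
    unfold coord1, coord2; simpl.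
    rewrite <- bottom; destruct Rle_dec; [|split; reflexivity].
    rewrite Iclamp_le0, Iclamp_ge1, <- sides by lra; split; reflexivity.
Qed.

Section FreeHomotopySquare.

Variables (X : Top) (H : X * I -> X) (t0 : I) (a : I -> X) (G : I * I -> X).

(* Lower half: the free homotopy s |-> H (a s, _) run from stage 1 down to stage t0;
   upper half: the nullhomotopy G of the loop H (a _, t0). *)
Definition free_homotopy_square (p : I * I) : X :=
  if Rle_dec (coord2 p - 1 / 2) 0
  then H (a (fst p), Iclamp (1 - (1 - ival t0) * (2 * coord2 p)))
  else G (fst p, Iclamp (2 * coord2 p - 1)).

Hypothesis H_cont : continuous (prod_open (is_open X) I_open) (is_open X) H.
Hypothesis H_end : forall z, H (z, I1) = z.
Hypothesis a_cont : continuous I_open (is_open X) a.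
Hypothesis a_closed : a I0 = a I1.
Hypothesis G_cont : continuous square_open (is_open X) G.
Hypothesis G_bottom : forall s, G (s, I0) = H (a s, t0).
Hypothesis G_sides : forall u, G (I0, u) = G (I1, u).

Lemma free_homotopy_square_continuous :
  continuous square_open (is_open X) free_homotopy_square.
Proof.
  apply continuous_paste; [Rcont2_auto | | |].
  - apply (continuous_comp _ (prod_open (is_open X) I_open) _ _ H); [|exact H_cont].
    apply continuous_pair.
    + exact (continuous_comp _ _ _ _ a continuous_fst a_cont).
    + apply continuous_of_Rcont2; Rcont2_auto.
  - apply (continuous_comp _ square_open _ _ G); [|exact G_cont].
    apply continuous_pair; [exact continuous_fst|].
    apply continuous_of_Rcont2; Rcont2_auto.
  - intros p hp; assert (hu : coord2 p = 1 / 2) by lra; rewrite hu.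
    replace (1 - (1 - ival t0) * (2 * (1 / 2))) with (ival t0) by field.
    rewrite Iclamp_ival, Iclamp_le0 by lra; symmetry; apply G_bottom.
Qed.

Lemma free_homotopy_square_bottom (s : I) : free_homotopy_square (s, I0) = a s.
Proof.
  unfold free_homotopy_square, coord2; simpl.
  destruct Rle_dec; [|lra].
  rewrite Iclamp_ge1 by lra; apply H_end.
Qed.

Lemma free_homotopy_square_top (s : I) : free_homotopy_square (s, I1) = G (s, I1).
Proof.
  unfold free_homotopy_square, coord2; simpl.
  destruct Rle_dec; [lra|].
  rewrite Iclamp_ge1 by lra; reflexivity.
Qed.

Lemma free_homotopy_square_sides (u : I) :
  free_homotopy_square (I0, u) = free_homotopy_square (I1, u).
Proof.
  unfold free_homotopy_square; simpl.
  destruct Rle_dec; [now rewrite a_closed | apply G_sides].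
Qed.

End FreeHomotopySquare.

Lemma trivial_loop_of_deformation (X : Top) (H : X * I -> X) (t0 : I) (k : X -> X)
  (x : X) (a : I -> X) :
  continuous (prod_open (is_open X) I_open) (is_open X) H -> (forall z, H (z, I1) = z) ->
  (forall z, H (z, t0) = k z) ->
  loop X x a -> trivial_loop X (k x) (fun s => k (a s)) -> trivial_loop X x a.
Proof.
  intros cH H1 Hk [ca [a0 a1]] [G [cG [G0 [G1 Gs]]]].
  assert (a_closed : a I0 = a I1) by congruence.
  rewrite <- a0.
  apply (trivial_loop_of_square X (free_homotopy_square X H t0 a G)).
  - apply free_homotopy_square_continuous; auto.
    intro s; rewrite Hk; apply G0.
  - now apply free_homotopy_square_bottom.
  - intro s; rewrite !free_homotopy_square_top, !G1; reflexivity.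
  - apply free_homotopy_square_sides; [exact a_closed|].
    intro u; destruct (Gs u) as [-> ->]; reflexivity.
Qed.

(** * Maps with a left homotopy inverse *)

Section LeftHomotopyInverse.

Variables (X Y : Top) (f : X -> Y) (g : Y -> X) (H : X * I -> X) (t0 : I).
Hypothesis f_cont : continuous (is_open X) (is_open Y) f.
Hypothesis g_cont : continuous (is_open Y) (is_open X) g.
Hypothesis H_cont : continuous (prod_open (is_open X) I_open) (is_open X) H.
Hypothesis H_end : forall z, H (z, I1) = z.
Hypothesis H_stage : forall z, H (z, t0) = g (f z).

Lemma loop_map (x : X) (a : I -> X) : loop X x a -> loop Y (f x) (fun s => f (a s)).
Proof.
  intros [ca [a0 a1]]; split; [exact (continuous_comp _ _ _ a f ca f_cont)|].
  simpl; rewrite a0, a1; auto.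
Qed.

Lemma trivial_loop_map (y : Y) (b : I -> Y) :
  trivial_loop Y y b -> trivial_loop X (g y) (fun s => g (b s)).
Proof.
  intros [K [cK [K0 [K1 Ks]]]]; exists (fun p => g (K p)).
  split; [exact (continuous_comp _ _ _ K g cK g_cont)|].
  split; [intro s; now rewrite K0|]; split; [intro s; now rewrite K1|].
  intro t; now destruct (Ks t) as [-> ->].
Qed.

Lemma nontrivial_loop_map (x : X) (a : I -> X) :
  loop X x a -> ~ trivial_loop X x a -> ~ trivial_loop Y (f x) (fun s => f (a s)).
Proof.
  intros la ntr tr; apply ntr.
  apply (trivial_loop_of_deformation X H t0 (fun z => g (f z)) x a H_cont H_end H_stage la).
  exact (trivial_loop_map _ _ tr).
Qed.

Lemma w_set_map (x : X) : w_set X x -> w_set Y (f x).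
Proof.
  intros hx V hV Vfx.
  destruct (hx (fun z => V (f z)) (f_cont V hV) Vfx) as [a [la [ntr inV]]].
  exists (fun s => f (a s)); auto using loop_map, nontrivial_loop_map.
Qed.

Lemma aw_set_map (x : X) : aw_set X x -> aw_set Y (f x).
Proof.
  intros [a [la null]]; exists (fun n s => f (a n s)); split.
  - intro n; destruct (la n); auto using loop_map, nontrivial_loop_map.
  - intros V hV Vfx; exact (null (fun z => V (f z)) (f_cont V hV) Vfx).
Qed.

End LeftHomotopyInverse.

(* P is carried forward by every map f having a map g with g o f equal to some stage
   H(., t0) of a homotopy H ending at the identity; this covers both the maps of a
   homotopy equivalence (t0 = 0) and the stages of its homotopies (g = id). *)
Definition deformation_invariant (P : forall Z : Top, Z -> Prop) : Prop :=
  forall (X Y : Top) (f : X -> Y) (g : Y -> X) (H : X * I -> X) (t0 : I),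
  continuous (is_open X) (is_open Y) f -> continuous (is_open Y) (is_open X) g ->
  continuous (prod_open (is_open X) I_open) (is_open X) H ->
  (forall z, H (z, I1) = z) -> (forall z, H (z, t0) = g (f z)) ->
  forall x, P X x -> P Y (f x).

Lemma deformation_invariant_w_set : deformation_invariant w_set.
Proof. exact w_set_map. Qed.

Lemma deformation_invariant_aw_set : deformation_invariant aw_set.
Proof. exact aw_set_map. Qed.

Lemma open_of_locally_open (X : Top) (W : X -> Prop) :
  (forall z, W z -> exists U, is_open X U /\ U z /\ forall y, U y -> W y) -> is_open X W.
Proof.
  intro hW.
  replace W with (fun x => exists U, (is_open X U /\ forall y, U y -> W y) /\ U x).
  - apply open_union; intros U [hU _]; exact hU.
  - apply functional_extensionality; intro x; apply propositional_extensionality; split.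
    + intros [U [[_ hUW] Ux]]; auto.
    + intro Wx; destruct (hW x Wx) as [U [hU [Ux hUW]]]; exists U; auto.
Qed.

Lemma continuous_section (X : Top) (t : I) :
  continuous (is_open X) (prod_open (is_open X) I_open) (fun z => (z, t)).
Proof.
  intros W hW; apply open_of_locally_open; intros z hz.
  destruct (hW _ hz) as [U [V [hU [hV [Uz [Vt hUV]]]]]].
  exists U; repeat split; auto.
Qed.

Lemma deformation_invariant_stage (P : forall Z : Top, Z -> Prop) (X : Top) (H : X * I -> X) :
  deformation_invariant P ->
  continuous (prod_open (is_open X) I_open) (is_open X) H -> (forall z, H (z, I1) = z) ->
  forall x t, P X x -> P X (H (x, t)).
Proof.
  intros hP cH H1 x t; apply (hP X X (fun z => H (z, t)) (fun z => z) H t); auto.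
  - exact (continuous_comp _ _ _ _ H (continuous_section X t) cH).
  - intros V hV; exact hV.
Qed.

(** * Restriction to subspaces *)

Definition restrict {X Y : Top} {P : X -> Prop} {Q : Y -> Prop} (f : X -> Y)
  (hf : forall x, P x -> Q (f x)) (u : {x | P x}) : {y | Q y} :=
  exist Q (f (proj1_sig u)) (hf _ (proj2_sig u)).

Lemma continuous_restrict (X Y : Top) (P : X -> Prop) (Q : Y -> Prop) (f : X -> Y)
  (hf : forall x, P x -> Q (f x)) :
  continuous (is_open X) (is_open Y) f ->
  continuous (sub_open X P) (sub_open Y Q) (restrict f hf).
Proof.
  intros cf V [U [hU eU]]; exists (fun x => U (f x)); split; [now apply cf|].
  intro u; apply (eU (restrict f hf u)).
Qed.

Lemma homotopic_id_subspace (X : Top) (P : X -> Prop) (k : {x | P x} -> {x | P x})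
  (H : X * I -> X) :
  continuous (prod_open (is_open X) I_open) (is_open X) H ->
  (forall x t, P x -> P (H (x, t))) ->
  (forall u, H (proj1_sig u, I0) = proj1_sig (k u)) -> (forall x, H (x, I1) = x) ->
  homotopic (subspace X P) (subspace X P) k (fun u => u).
Proof.
  intros cH HP H0 H1.
  exists (fun p => exist P (H (proj1_sig (fst p), snd p)) (HP _ _ (proj2_sig (fst p)))).
  split; [|split; intro u; apply sig_eq; simpl; auto].
  intros V [U [hU eU]] p hp; apply eU in hp; simpl in hp.
  destruct (cH U hU _ hp) as [U1 [V1 [hU1 [hV1 [hu [hv hb]]]]]].
  exists (fun y => U1 (proj1_sig y)), V1.
  split; [exists U1; split; [exact hU1 | tauto]|].
  repeat split; auto.
  intros q hq1 hq2; apply eU, (hb (proj1_sig (fst q), snd q)); auto.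
Qed.

Lemma homotopy_equivalent_subspace (P : forall Z : Top, Z -> Prop) (X Y : Top) :
  deformation_invariant P ->
  homotopy_equivalent X Y -> homotopy_equivalent (subspace X (P X)) (subspace Y (P Y)).
Proof.
  intros hP [f [g [cf [cg [[HX [cHX [HX0 HX1]]] [HY [cHY [HY0 HY1]]]]]]]].
  pose proof (hP X Y f g HX I0 cf cg cHX HX1 HX0) as fP.
  pose proof (hP Y X g f HY I0 cg cf cHY HY1 HY0) as gP.
  exists (restrict f fP), (restrict g gP).
  split; [now apply continuous_restrict|].
  split; [now apply continuous_restrict|].
  split.
  - apply (homotopic_id_subspace X (P X) _ HX); auto.
    exact (deformation_invariant_stage P X HX hP cHX HX1).
  - apply (homotopic_id_subspace Y (P Y) _ HY); auto.
    exact (deformation_invariant_stage P Y HY hP cHY HY1).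
Qed.

Theorem mainTheorem6 (X Y : Top) :
  homotopy_equivalent X Y ->
  homotopy_equivalent (w X) (w Y) /\ homotopy_equivalent (aw X) (aw Y).
Proof.
  intro h; split.
  - exact (homotopy_equivalent_subspace w_set X Y deformation_invariant_w_set h).
  - exact (homotopy_equivalent_subspace aw_set X Y deformation_invariant_aw_set h).
Qed.
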